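(* There is an absolute constant $C_0\ge 3\times10^3$ such that the following holds. Let $k\ge2$, $r\ge0$ be integers and $n\ge C_0(r+1)^3(k+r)k^2$. Suppose $\mathcal F\subseteq\binom{[n]}{k}$ has size $|\mathcal F|=\sum_{i=1}^{r}\binom{n-i}{k-1}+\delta\binom{n-(r+1)}{k-1}$ for some $\delta\in\left[\frac{150k^3}{n},1\right]$, and $\mathcal I(\mathcal F)\ge\frac{r+\delta^2}{(r+\delta)^2}|\mathcal F|^2$. Then there exists $x\in[n]$ with $|\mathcal F(x)|\ge\frac{|\mathcal F|}{4(r+1)}$.
   Context: $\mathcal F(x)=\{F\in\mathcal F:x\in F\}$; $\mathcal I(\mathcal F)=\sum_{A,B\in\mathcal F}|A\cap B|=\sum_{x\in[n]}|\mathcal F(x)|^2$ (ordered pairs). *)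

From mathcomp Require Import all_boot all_order all_algebra.
Set Implicit Arguments. Unset Strict Implicit. Unset Printing Implicit Defensive.

Definition star (n : nat) (F : {set {set 'I_n}}) (x : 'I_n) : {set {set 'I_n}} :=
  [set A in F | x \in A].

Definition Ifam (n : nat) (F : {set {set 'I_n}}) : nat :=
  \sum_(A in F) \sum_(B in F) #|A :&: B|.

From mathcomp Require Import all_boot all_order all_algebra.
From mathcomp Require Import zify ring lra.
Import Order.TTheory GRing.Theory Num.Theory.
Set Implicit Arguments. Unset Strict Implicit. Unset Printing Implicit Defensive.

(* Lemma 2.1.  Let F be a k-uniform family on [n] with m = |F| elements, let
   d(x) = |F(x)| be the degree of x and Q = C(n-2, k-2), an upper bound on
   every codegree |{A in F | x, y in A}|.
   1. Double counting gives I(F) = sum_x d(x)^2, sum_x d(x) = k m and, for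
      every vertex set S, sum_(x in S) d(x) <= m + |S|^2 Q (expand
      2|A :&: S| <= 1 + |A :&: S|^2 over A in F).
   2. Concentration: if (4ka)^2 Q < m and I(F) >= m^2/a, some vertex has
      degree >= m/(4a).  Otherwise the vertices of degree >= m/(2ka) are
      fewer than 4ka by (1), so their degrees sum to less than 2m, and
      splitting sum_x d(x)^2 at this threshold gives I(F) < m^2/a.
   3. Numerics, with a = r+1 and N = n-(r+1):
      (r+delta^2)/(r+delta)^2 >= 1/(r+1); m >= (r+delta) C(N, k-1); a
      Bernoulli-type estimate on binomials gives
      N C(n-2, k-2) <= 2(k-1) C(N, k-1); and the bounds on n and delta give
      2(k-1)(4k(r+1))^2 < N (r+delta).  Together these yield (4ka)^2 Q < m. *)

Lemma card_sep_sum (T : finType) (D : {set T}) (P : pred T) :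
  #|[set x in D | P x]| = \sum_(x in D) P x.
Proof.
rewrite -sum1_card big_mkcond [RHS]big_mkcond; apply: eq_bigr => x _.
by rewrite !inE; case: (x \in D); case: (P x).
Qed.

Lemma cardI_sum (T : finType) (A B : {set T}) :
  #|A :&: B| = \sum_(x in B) (x \in A).
Proof. by rewrite -card_sep_sum; apply: eq_card => x; rewrite !inE andbC. Qed.

Lemma exists_subset_card (T : finType) (A : {set T}) (s : nat) :
  (s <= #|A|)%N -> exists2 S : {set T}, S \subset A & #|S| = s.
Proof.
move=> sA; have [S] : exists S, S \in [set S : {set T} | S \subset A & #|S| == s].
  by apply/card_gt0P; rewrite cards_draws bin_gt0.
by rewrite inE => /andP [SA /eqP cS]; exists S.
Qed.

Section Degrees.
Variables (n k : nat) (F : {set {set 'I_n}}).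
Hypothesis F_uniform : {in F, forall A : {set 'I_n}, #|A| = k}.

Definition codegree (x y : 'I_n) : nat := #|[set A in F | (x \in A) && (y \in A)]|.

Lemma card_star (x : 'I_n) : #|star F x| = \sum_(A in F) (x \in A).
Proof. exact: card_sep_sum. Qed.

Lemma sum_sqr_codegree (S : {set 'I_n}) :
  \sum_(A in F) #|A :&: S| ^ 2 = \sum_(x in S) \sum_(y in S) codegree x y.
Proof.
have -> : \sum_(A in F) #|A :&: S| ^ 2
        = \sum_(A in F) \sum_(x in S) \sum_(y in S) ((x \in A) * (y \in A)).
  apply: eq_bigr => A _; rewrite cardI_sum expnS expn1 big_distrl /=.
  by apply: eq_bigr => x _; rewrite big_distrr.
rewrite exchange_big; apply: eq_bigr => x _; rewrite exchange_big.
apply: eq_bigr => y _; rewrite /codegree card_sep_sum.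
by apply: eq_bigr => A _; case: (x \in A); case: (y \in A).
Qed.

Lemma Ifam_degrees : Ifam F = \sum_x #|star F x| ^ 2.
Proof.
have cardI (A B : {set 'I_n}) : #|A :&: B| = \sum_x ((x \in A) * (x \in B)).
  rewrite -(setIT (A :&: B)) cardI_sum big_mkcond /=.
  by apply: eq_bigr => x _; rewrite !inE; case: (x \in A); case: (x \in B).
rewrite /Ifam (eq_bigr _ (fun A _ => eq_bigr _ (fun B _ => cardI A B))).
rewrite (eq_bigr _ (fun A _ => exchange_big _ _ _ _ _ _)) exchange_big /=.
apply: eq_bigr => x _; rewrite card_star expnS expn1 big_distrl /=.
by apply: eq_bigr => A _; rewrite big_distrr.
Qed.

Lemma sum_degrees : \sum_x #|star F x| = k * #|F|.
Proof.
rewrite (eq_bigr _ (fun x _ => card_star x)) exchange_big /= -sum1_card big_distrr.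
apply: eq_bigr => A AF; rewrite /= muln1 -(F_uniform AF) -sum1_card [RHS]big_mkcond.
by apply: eq_bigr => x _; case: (x \in A).
Qed.

(* A codegree counts (k-2)-subsets of the n-2 points other than x and y. *)
Lemma codegree_le (x y : 'I_n) : x != y -> (codegree x y <= 'C(n - 2, k - 2))%N.
Proof.
move=> xy; set D := [set A in F | (x \in A) && (y \in A)].
have xyA A : A \in D -> [set x; y] \subset A.
  by rewrite !inE subUset !sub1set => /andP [].
have cxy : #|~: [set x; y]| = (n - 2)%N by rewrite cardsCs setCK cards2 xy card_ord.
rewrite /codegree -/D -cxy -cards_draws.
rewrite -(@card_in_imset _ _ (fun A => A :\: [set x; y]) D).
  apply: subset_leq_card; apply/subsetP => _ /imsetP [A AD ->].
  have := AD; rewrite !inE => /andP [AF _].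
  rewrite subDset setUCr subsetT /= cardsD (setIidPr (xyA A AD)) cards2 xy.
  by rewrite (F_uniform AF).
move=> A1 A2 /xyA sA1 /xyA sA2 eqD.
rewrite -(setID A1 [set x; y]) -(setID A2 [set x; y]).
by rewrite (setIidPr sA1) (setIidPr sA2) eqD.
Qed.

Lemma codegree_row_le (S : {set 'I_n}) (x : 'I_n) : x \in S ->
  (\sum_(y in S) codegree x y <= #|star F x| + #|S| * 'C(n - 2, k - 2))%N.
Proof.
move=> xS; rewrite (bigD1 x) //= -sum_nat_const.
have -> : codegree x x = #|star F x|.
  by apply: eq_card => A; rewrite !inE andbb.
rewrite leq_add2l big_mkcondr /=; apply: leq_sum => y _.
by case: eqP => [// | /eqP yx]; apply: codegree_le; rewrite eq_sym.
Qed.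

Lemma sum_star_le (S : {set 'I_n}) :
  (\sum_(x in S) #|star F x| <= #|F| + #|S| ^ 2 * 'C(n - 2, k - 2))%N.
Proof.
have sum_trace : \sum_(x in S) #|star F x| = \sum_(A in F) #|A :&: S|.
  rewrite (eq_bigr _ (fun x _ => card_star x)) exchange_big /=.
  by apply: eq_bigr => A _; rewrite cardI_sum.
have sum_sqr : (\sum_(A in F) #|A :&: S| ^ 2
                <= \sum_(x in S) #|star F x| + #|S| ^ 2 * 'C(n - 2, k - 2))%N.
  rewrite sum_sqr_codegree expnS expn1 -mulnA -sum_nat_const -big_split /=.
  by apply: leq_sum => x xS; apply: codegree_row_le.
set X := \sum_(x in S) #|star F x| in sum_trace sum_sqr *.
set Y := \sum_(A in F) #|A :&: S| ^ 2 in sum_sqr.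
have amgm : (X + X <= #|F| + Y)%N.
  rewrite sum_trace -big_split -sum1_card -big_split /=.
  by apply: leq_sum => A _; nia.
lia.
Qed.

End Degrees.

Local Open Scope ring_scope.

Lemma sum_sqr_threshold (R : realFieldType) (I : finType) (f : I -> R) (t M : R) :
  (forall i, 0 <= f i) -> (forall i, f i <= M) ->
  \sum_i f i ^+ 2 <= M * \sum_(i | t <= f i) f i + t * \sum_(i | ~~ (t <= f i)) f i.
Proof.
move=> f_ge0 f_le; rewrite (bigID (fun i => t <= f i)) /= !mulr_sumr.
apply: lerD; apply: ler_sum => i; rewrite expr2.
  by move=> _; rewrite ler_wpM2r.
by rewrite -ltNge => /ltW fi_lt; rewrite ler_wpM2r.
Qed.

Section Concentration.
Variables (R : realFieldType) (n k : nat) (F : {set {set 'I_n}}).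
Hypothesis F_uniform : {in F, forall A : {set 'I_n}, #|A| = k}.

Local Notation m := (#|F|%:R : R).
Local Notation Q := ('C(n - 2, k - 2)%:R : R).
Local Notation deg x := (#|star F x|%:R : R).

(* If s^2 Q < m, vertices of degree >= t, with s t >= 2m, are fewer than s
   and their degrees sum to less than 2m. *)
Lemma heavy_sum_lt (s : nat) (t : R) :
  (s ^ 2)%N%:R * Q < m -> 2 * m <= s%:R * t -> \sum_(x | t <= deg x) deg x < 2 * m.
Proof.
move=> sQ_lt st; set T := [set x | t <= deg x].
have sum_le (S : {set 'I_n}) : \sum_(x in S) deg x <= m + (#|S| ^ 2)%N%:R * Q.
  by rewrite -natr_sum -natrM -natrD ler_nat sum_star_le.
have T_small : (#|T| < s)%N.
  rewrite ltnNge; apply/negP => /exists_subset_card [S ST cardS].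
  have : s%:R * t <= \sum_(x in S) deg x.
    rewrite -cardS mulr_natl -sumr_const ler_sum // => x /(subsetP ST).
    by rewrite inE.
  have := sum_le S; rewrite cardS; lra.
have -> : \sum_(x | t <= deg x) deg x = \sum_(x in T) deg x.
  by apply: eq_bigl => x; rewrite inE.
apply: le_lt_trans (sum_le T) _.
have : (#|T| ^ 2)%N%:R * Q <= (s ^ 2)%N%:R * Q.
  by rewrite ler_wpM2r // ler_nat leq_exp2r // ltnW.
lra.
Qed.

Lemma degree_concentration (a : nat) : (0 < k)%N -> (0 < a)%N ->
  ((4 * k * a) ^ 2)%N%:R * Q < m -> m ^+ 2 / a%:R <= (Ifam F)%:R ->
  exists x : 'I_n, m / (4 * a%:R) <= deg x.
Proof.
move=> k_gt0 a_gt0 codeg_small I_large; set M := m / (4 * a%:R).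
have [/existsP [x Mx] | /existsPn deg_small] := boolP [exists x, M <= deg x].
  by exists x.
exfalso; set t := m / (2 * k%:R * a%:R).
have a_pos : 0 < a%:R :> R by rewrite ltr0n.
have k_pos : 0 < k%:R :> R by rewrite ltr0n.
have m_pos : 0 < m by apply: le_lt_trans codeg_small; rewrite mulr_ge0.
have heavy : \sum_(x | t <= deg x) deg x < 2 * m.
  apply: heavy_sum_lt codeg_small _.
  have -> : (4 * k * a)%:R * t = 2 * m.
    by rewrite /t !natrM; field; rewrite !pnatr_eq0 -!lt0n k_gt0 a_gt0.
  exact: lexx.
have split_deg : \sum_(x | t <= deg x) deg x + \sum_(x | ~~ (t <= deg x)) deg x
                 = k%:R * m.
  have -> : k%:R * m = (k * #|F|)%:R by rewrite natrM.
  by rewrite -(sum_degrees F_uniform) natr_sum [in RHS](bigID (fun x => t <= deg x)).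
have M_pos : 0 < M by rewrite divr_gt0 // mulr_gt0.
have t_pos : 0 < t by rewrite divr_gt0 // !mulr_gt0.
have : (Ifam F)%:R <= M * \sum_(x | t <= deg x) deg x
                      + t * \sum_(x | ~~ (t <= deg x)) deg x.
  rewrite Ifam_degrees natr_sum; under eq_bigr do rewrite natrX.
  apply: sum_sqr_threshold => x; first exact: ler0n.
  by rewrite ltW // ltNge deg_small.
have heavy_part : M * \sum_(x | t <= deg x) deg x < m ^+ 2 / (2 * a%:R).
  have -> : m ^+ 2 / (2 * a%:R) = M * (2 * m).
    by rewrite /M; field; rewrite pnatr_eq0 -lt0n.
  by rewrite ltr_pM2l.
have light_part : t * \sum_(x | ~~ (t <= deg x)) deg x <= m ^+ 2 / (2 * a%:R).
  have -> : m ^+ 2 / (2 * a%:R) = t * (k%:R * m).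
    by rewrite /t; field; rewrite !pnatr_eq0 -!lt0n k_gt0 a_gt0.
  by rewrite ler_pM2l // -split_deg lerDr sumr_ge0.
have : m ^+ 2 / a%:R = m ^+ 2 / (2 * a%:R) + m ^+ 2 / (2 * a%:R).
  by field; rewrite pnatr_eq0 -lt0n.
lra.
Qed.

End Concentration.

Lemma bin_shift_lower (R : realFieldType) (c b j : nat) :
  'C(c + j, b)%:R * (1 - (j * b)%:R / c.+1%:R) <= 'C(c, b)%:R :> R.
Proof.
elim: j c => [|j IH] c; first by rewrite addn0 mul0n mul0r subr0 mulr1.
have IH1 := IH c.+1; rewrite addSn -addnS in IH1.
set X := 'C(c + j.+1, b)%:R : R in IH1 *.
set Y := 'C(c.+1, b)%:R : R in IH1.
set Z := 'C(c, b)%:R : R.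
have X0 : 0 <= X by exact: ler0n.
set x := b%:R / c.+1%:R : R; set u := (j * b)%:R / c.+1%:R : R.
set C := c.+1%:R : R in x u *.
have C_pos : 0 < C by rewrite ltr0n.
have C_neq0 : C != 0 by exact: lt0r_neq0.
have x0 : 0 <= x by rewrite divr_ge0.
have u0 : 0 <= u by rewrite divr_ge0.
have one_step : Y * (1 - x) <= Z.
  have [bc|cb] := leqP b c.+1; last by rewrite /Y bin_small // mul0r ler0n.
  have E : C * Z = (C - b%:R) * Y.
    by rewrite /C -natrB // -!natrM mul_bin_down.
  have -> : Y * (1 - x) = (C - b%:R) * Y / C.
    by rewrite /x; field; rewrite addrC natr1 pnatr_eq0.
  by rewrite -E mulrC mulKf.
have shifted : X * (1 - u) <= Y.
  apply: le_trans IH1; rewrite ler_wpM2l // lerD2l lerN2 ler_wpM2l ?ler0n //.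
  by rewrite lef_pV2 ?posrE ?ltr0n // /C ler_nat.
have -> : 1 - (j.+1 * b)%:R / C = 1 - u - x.
  by rewrite /u /x mulSn natrD; field; rewrite addrC natr1 pnatr_eq0.
have [x1|x1] := lerP x 1; last by apply: le_trans (ler0n _ _); nra.
have : X * (1 - u) * (1 - x) <= Y * (1 - x) by apply: ler_wpM2r; rewrite ?subr_ge0.
have : 0 <= X * u * x by apply: mulr_ge0; first apply: mulr_ge0.
nra.
Qed.

Lemma bin_shift_le_double (c b j : nat) :
  (2 * (j * b) <= c.+1)%N -> ('C(c + j, b) <= 2 * 'C(c, b))%N.
Proof.
move=> jb_small; rewrite -(ler_nat rat) natrM.
have u_half : (j * b)%:R / c.+1%:R <= 1 / 2 :> rat.
  rewrite ler_pdivrMr ?ltr0n //; move: jb_small; rewrite -(ler_nat rat) natrM; lra.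
have := bin_shift_lower rat c b j; move: u_half; move: ((j * b)%:R / _) => u u_half.
have := ler_wpM2l (ler0n rat 'C(c + j, b)) u_half.
rewrite mulrBr mulr1; lra.
Qed.

Lemma n_large_consequences (k r n : nat) : (2 <= k)%N ->
  (3000 * ((r + 1) ^ 3 * (k + r) * k ^ 2) <= n)%N ->
  [/\ (33 * ((r + 1) ^ 2 * k ^ 3) <= n - (r + 1))%N,
      (2 * (r * (k - 2)) <= n - (r + 1))%N & (k <= n - (r + 1))%N].
Proof.
move=> k2 n_large.
have cubic : ((r + 1) ^ 2 * k ^ 3 * (r + 1) <= (r + 1) ^ 3 * (k + r) * k ^ 2)%N.
  rewrite !expnS !expn0 !muln1; nia.
have linear : (r + k + 1 <= (r + 1) ^ 2 * k ^ 3 * (r + 1))%N.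
  rewrite !expnS !expn0 !muln1; nia.
split; nia.
Qed.

Lemma weight_le_cube (k r : nat) :
  (2 * (4 * k * (r + 1)) ^ 2 * (k - 1) <= 32 * ((r + 1) ^ 2 * k ^ 3))%N.
Proof.
have -> : (2 * (4 * k * (r + 1)) ^ 2 * (k - 1)
           = 32 * ((r + 1) ^ 2 * (k ^ 2 * (k - 1))))%N by move: (k - 1)%N => z; ring.
do 2 apply: leq_mul => //.
by rewrite [(k ^ 3)%N]expnSr; apply: leq_mul (leqnn _) (leq_subr _ _).
Qed.

(* The weight 2 (4k(r+1))^2 (k-1) is below (n-(r+1))(r+delta): for r = 0
   this uses delta n >= 150 k^3, for r >= 1 the size of n alone. *)
Lemma weight_lt_budget (R : realFieldType) (k r n : nat) (delta : R) :
  (2 <= k)%N ->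
  (33 * ((r + 1) ^ 2 * k ^ 3) <= n - (r + 1))%N ->
  150 * (k ^ 3)%:R / n%:R <= delta -> delta <= 1 ->
  (2 * (4 * k * (r + 1)) ^ 2 * (k - 1))%N%:R < (n - (r + 1))%:R * (r%:R + delta).
Proof.
move=> k2 N_large; have lhs_le := weight_le_cube k r.
have k3_pos : (0 < k ^ 3)%N by rewrite expn_gt0 (leq_trans _ k2).
have lhs_lt : (2 * (4 * k * (r + 1)) ^ 2 * (k - 1) < n - (r + 1))%N.
  apply: leq_trans N_large; rewrite (leq_ltn_trans lhs_le) // ltn_pmul2r //.
  by rewrite muln_gt0 expn_gt0 addn1.
have n_pos : 0 < n%:R :> R by rewrite ltr0n; lia.
move=> d_lo d_hi.
have d_pos : 0 <= delta.
  by apply: le_trans d_lo; apply: divr_ge0; [apply: mulr_ge0|]; exact: ler0n.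
case: r N_large lhs_le lhs_lt => [|r] N_large lhs_le lhs_lt; last first.
  have one_le : 1 <= r.+1%:R + delta.
    have : 1 <= r.+1%:R :> R by rewrite ler1n.
    lra.
  apply: lt_le_trans (ler_wpM2l (ler0n _ _) one_le).
  rewrite mulr1 ltr_nat.
  exact: lhs_lt.
have d_n : 150 * (k ^ 3)%:R <= delta * n%:R by rewrite -ler_pdivrMr.
have K1 : 1 <= (k ^ 3)%:R :> R by rewrite ler1n.
rewrite -(ler_nat R) !natrM in lhs_le.
have n_ge1 : (0 + 1 <= n)%N by move: lhs_lt; clear; lia.
rewrite (natrB _ n_ge1); lra.
Qed.

Lemma codegree_term_small (R : realFieldType) (k r n : nat) (delta m : R) :
  (2 <= k)%N ->
  (3000 * ((r + 1) ^ 3 * (k + r) * k ^ 2) <= n)%N ->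
  150 * (k ^ 3)%:R / n%:R <= delta -> delta <= 1 ->
  (r%:R + delta) * 'C(n - (r + 1), k - 1)%:R <= m ->
  ((4 * k * (r + 1)) ^ 2)%N%:R * 'C(n - 2, k - 2)%:R < m.
Proof.
move=> k2 n_large; have [N_large N_bin N_k] := n_large_consequences k2 n_large.
set N := (n - (r + 1))%N in N_large N_bin N_k *.
set W := ((4 * k * (r + 1)) ^ 2)%N.
have codeg_le : ('C(n - 2, k - 2) * N <= 2 * (k - 1) * 'C(N, k - 1))%N.
  have [c Nc] : exists c, N = c.+1 by exists N.-1; rewrite prednK //; lia.
  have -> : (n - 2 = c + r)%N by lia.
  have -> : (k - 1 = (k - 2).+1)%N by lia.
  rewrite Nc -mulnA -mul_bin_diag mulnCA [X in (X <= _)%N]mulnC leq_mul2l /=.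
  apply: bin_shift_le_double; rewrite -Nc; lia.
have weighted : (W * 'C(n - 2, k - 2) * N <= 2 * W * (k - 1) * 'C(N, k - 1))%N.
  have -> : (2 * W * (k - 1) * 'C(N, k - 1) = W * (2 * (k - 1) * 'C(N, k - 1)))%N.
    by ring.
  by rewrite -mulnA leq_mul2l codeg_le orbT.
move=> d_lo d_hi m_large; have N_budget := weight_lt_budget k2 N_large d_lo d_hi.
have N_pos : 0 < N%:R :> R by rewrite ltr0n; lia.
have P_pos : 0 < 'C(N, k - 1)%:R :> R by rewrite ltr0n bin_gt0; lia.
rewrite -(ltr_pM2r N_pos).
apply: le_lt_trans (_ : _ <= (2 * W * (k - 1))%N%:R * 'C(N, k - 1)%:R) _.
  by rewrite -!natrM ler_nat.
apply: lt_le_trans (_ : _ < N%:R * (r%:R + delta) * 'C(N, k - 1)%:R) _.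
  by rewrite ltr_pM2r.
by rewrite -mulrA mulrC ler_wpM2r // ltW.
Qed.

Lemma ratio_lower (R : realFieldType) (r d : R) : 0 <= r -> 0 < d ->
  (r + 1)^-1 <= (r + d ^+ 2) / (r + d) ^+ 2.
Proof.
move=> r_ge0 d_pos.
have sq_pos : 0 < (r + d) ^+ 2 by rewrite exprn_gt0 //; lra.
have r1_pos : 0 < r + 1 by lra.
rewrite ler_pdivlMr // mulrC ler_pdivrMr //.
have : 0 <= r * (1 - d) ^+ 2 by rewrite mulr_ge0 ?sqr_ge0.
nra.
Qed.

Lemma bin_sum_lower (R : numDomainType) (n r b : nat) :
  r%:R * 'C(n - (r + 1), b)%:R <= \sum_(1 <= i < r.+1) 'C(n - i, b)%:R :> R.
Proof.
have -> : r%:R * 'C(n - (r + 1), b)%:R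
          = \sum_(1 <= i < r.+1) 'C(n - (r + 1), b)%:R :> R.
  by rewrite sumr_const_nat subn1 mulr_natl.
apply: ler_sum_nat => i /andP [_ ir]; rewrite ler_nat.
by apply/leq_bin2l/leq_sub2l; rewrite addn1 ltnW.
Qed.

Theorem lemma2p1 :
  exists C0 : rat, 3000 <= C0 /\
  forall (k r n : nat) (F : {set {set 'I_n}}) (delta : rat),
    (2 <= k)%N ->
    C0 * (((r + 1) ^ 3 * (k + r) * k ^ 2)%N)%:R <= n%:R ->
    {in F, forall A : {set 'I_n}, #|A| = k} ->
    150 * (k ^ 3)%:R / n%:R <= delta -> delta <= 1 ->
    (#|F|)%:R = \sum_(1 <= i < r.+1) ('C(n - i, k - 1))%:R
                + delta * ('C(n - (r + 1), k - 1))%:R ->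
    (r%:R + delta ^+ 2) / (r%:R + delta) ^+ 2 * (#|F|)%:R ^+ 2 <= (Ifam F)%:R ->
    exists x : 'I_n, (#|F|)%:R / (4 * (r + 1)%N%:R) <= (#|star F x|)%:R :> rat.
Proof.
exists 3000; split; first exact: lexx.
move=> k r n F delta k2 n_large F_uniform d_lo d_hi F_size I_large.
have n_large_nat : (3000 * ((r + 1) ^ 3 * (k + r) * k ^ 2) <= n)%N.
  rewrite -(ler_nat rat) natrM; exact: n_large.
have F_large : (r%:R + delta) * 'C(n - (r + 1), k - 1)%:R <= #|F|%:R.
  by rewrite F_size mulrDl lerD2r bin_sum_lower.
have d_pos : 0 < delta.
  apply: (lt_le_trans _ d_lo); apply: divr_gt0; [apply: mulr_gt0|]; rewrite ltr0n.
  - by [].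
  - by rewrite expn_gt0 (leq_trans _ k2).
  - by apply: leq_trans n_large_nat; rewrite !muln_gt0 addn1 addn_gt0 (ltnW k2).
apply: (degree_concentration F_uniform (a := r + 1)).
- exact: ltnW k2.
- by rewrite addn1.
- exact: codegree_term_small k2 n_large_nat d_lo d_hi F_large.
apply: le_trans I_large; rewrite mulrC; apply: ler_wpM2r; first exact: sqr_ge0.
rewrite addn1 -natr1; apply: ratio_lower d_pos; exact: ler0n.
Qed.
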